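(* Let $\mathcal X$ be a coherent configuration on $\Omega$, let $\Pi$ be a generalized base of $\mathcal X$ and let $\alpha\in\Omega$. Put $\Omega'=\Omega\setminus\{\alpha\}$, let $\mathcal X'$ be the restriction of $\mathcal X_\alpha$ to $\Omega'$, and let $\Pi'=\{\Gamma\setminus\{\alpha\}:\Gamma\in\Pi\}$. Then $\Pi'$ is a generalized base of $\mathcal X'$.
   Context: A coherent configuration on a finite set $\Omega$ is a pair $\mathcal X=(\Omega,S)$ where $S$ is a partition of $\Omega\times\Omega$ such that $1_\Omega$ is a union of elements of $S$, $s^*=\{(\beta,\alpha):(\alpha,\beta)\in s\}\in S$ for $s\in S$, and for $r,s,t\in S$ the number $|\{\gamma:(\alpha,\gamma)\in r,(\gamma,\beta)\in s\}|$ is independent of $(\alpha,\beta)\in t$. Relations are unions of elements of $S$; fibers are sets $\Gamma$ with $1_\Gamma\in S$. A fission of $\mathcal X$ is a coherent configuration on $\Omega$ all of whose relations include those of $\mathcal X$. $\mathcal X$ is complete if every element of $S$ is a singleton. For $\Pi\subseteq 2^\Omega$, the $\Pi$-fission of $\mathcal X$ is the smallest fission in which every element of $\Pi$ is a union of fibers; $\Pi$ is a generalized base if its $\Pi$-fission is complete. $\mathcal X_\alpha$ denotes the $\{\{\alpha\}\}$-fission of $\mathcal X$ (so $\{\alpha\}$ and hence $\Omega\setminus\{\alpha\}$ are unions of fibers). For a union $\Gamma$ of fibers, the restriction $\mathcal X_\Gamma=(\Gamma,\{s\cap(\Gamma\times\Gamma):s\in S\}\setminus\{\emptyset\})$. 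*)

From mathcomp Require Import all_boot.
Set Implicit Arguments. Unset Strict Implicit. Unset Printing Implicit Defensive.

Section CC.
Variable T : finType.
Implicit Types (D G : {set T}) (S : {set {set T * T}}) (r s t : {set T * T}).

Definition diag G : {set T * T} := [set p | (p.1 == p.2) && (p.1 \in G)].

Definition transp s : {set T * T} := [set p | (p.2, p.1) \in s].

Definition is_rel S r : Prop := exists2 P : {set {set T * T}}, P \subset S & r = cover P.

Definition inum r s (a b : T) : nat := #|[set g | ((a, g) \in r) && ((g, b) \in s)]|.

Definition coherent D S : Prop :=
  [/\ partition S (setX D D),
      is_rel S (diag D),
      (forall s, s \in S -> transp s \in S) &
      (forall r s t, r \in S -> s \in S -> t \in S ->
         forall a b a' b', (a, b) \in t -> (a', b') \in t ->
           inum r s a b = inum r s a' b')].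

Definition fiber S G : Prop := diag G \in S.

Definition union_of_fibers S G : Prop :=
  exists2 F : {set {set T}}, (forall H, H \in F -> fiber S H) & G = \bigcup_(H in F) H.

Definition fission D S S' : Prop :=
  coherent D S' /\ (forall r, is_rel S r -> is_rel S' r).

Definition Pi_fission D S (Pi : {set {set T}}) S' : Prop :=
  [/\ fission D S S',
      (forall G, G \in Pi -> union_of_fibers S' G) &
      (forall S'', fission D S S'' ->
         (forall G, G \in Pi -> union_of_fibers S'' G) -> fission D S' S'')].

Definition complete S : Prop := forall s, s \in S -> #|s| = 1.

Definition gen_base D S (Pi : {set {set T}}) : Prop :=
  exists2 S', Pi_fission D S Pi S' & complete S'.

Definition restr G S : {set {set T * T}} := [set s :&: setX G G | s in S] :\ set0.

End CC.

From mathcomp Require Import all_boot.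
Set Implicit Arguments. Unset Strict Implicit. Unset Printing Implicit Defensive.

(* Let [S2] be a fission of [X'] in which every [G :\ a], [G \in Pi], is a
   union of fibers. Adjoining [a] to [S2] as a one-point fiber yields a
   coherent configuration on [D]: its cells are those of [S2], [{(a, a)}] and
   [{a} x F], [F x {a}] for the fibers [F] of [S2]. It refines [X_a], because
   the cells of [X_a] inside [D'] are relations of [S2] while a cell of [X_a]
   through [a] is determined by the fiber of its other coordinate. Each
   [G \in Pi] is a union of its fibers, so it refines the complete
   [Pi]-fission of [X]; hence it, and with it [S2], is complete. Therefore the
   complete configuration on [D'] is the [Pi']-fission of [X']. *)

Lemma pblock_notin_cover (U : finType) (P : {set {set U}}) x :
  x \notin cover P -> pblock P x = set0.
Proof.
move=> xP; rewrite /pblock; case: pickP => //= B /andP[PB xB].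
by case/negP: xP; apply/bigcupP; exists B.
Qed.

Lemma eq_pblock_mem (U : finType) (P : {set {set U}}) X R x :
  partition P X -> x \in X -> (R == pblock P x) = (R \in P) && (x \in R).
Proof.
move=> hP xX; have cP := cover_partition hP.
case RP: (R \in P) => /=.
  apply/eqP/idP => [->|xR]; first by rewrite mem_pblock cP.
  by rewrite (def_pblock (partition_trivIset hP) RP xR).
by apply/eqP => eR; move: RP; rewrite eR pblock_mem // cP.
Qed.

Section Relations.
Variable T : finType.
Implicit Types (P : {set {set T * T}}) (X r : {set T * T}).

Lemma transpK : involutive (@transp T).
Proof. by move=> r; apply/setP=> [[u v]]; rewrite !inE. Qed.

Lemma is_rel_sub P X r : partition P X -> is_rel P r -> r \subset X.
Proof.
move=> hP [P0 sP0 ->]; apply/subsetP=> x /bigcupP [B BP0 xB].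
exact: (subsetP (partitionS hP (subsetP sP0 _ BP0))).
Qed.

Lemma is_rel_pblock_sub P X r x : partition P X -> is_rel P r -> x \in r ->
  pblock P x \subset r.
Proof.
move=> hP [P0 sP0 ->] /bigcupP [B BP0 xB].
rewrite (def_pblock (partition_trivIset hP) (subsetP sP0 _ BP0) xB).
exact: bigcup_sup.
Qed.

Lemma is_rel_pblock P X r : partition P X -> r \subset X ->
  (forall x, x \in r -> pblock P x \subset r) -> is_rel P r.
Proof.
move=> hP rX rP; exists [set B in P | B \subset r].
  by apply/subsetP=> B; rewrite inE => /andP[].
apply/setP=> x; apply/idP/bigcupP => [xr|[B]]; last first.
  by rewrite inE => /andP[_ /subsetP]; apply.
have xP : x \in cover P by rewrite (cover_partition hP); apply: (subsetP rX).
by exists (pblock P x); rewrite ?inE ?pblock_mem ?rP ?mem_pblock.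
Qed.

Lemma is_rel_complete P X r : partition P X -> complete P -> r \subset X ->
  is_rel P r.
Proof.
move=> hP cP rX; apply: (is_rel_pblock hP rX) => x xr.
have xP : x \in cover P by rewrite (cover_partition hP); apply: (subsetP rX).
have /eqP/cards1P [y Ey] := cP _ (pblock_mem xP).
have : x \in pblock P x by rewrite mem_pblock.
by rewrite Ey inE => /eqP xy; rewrite sub1set -xy.
Qed.

Lemma complete_of_is_rel1 P X : partition P X ->
  (forall x, x \in X -> is_rel P [set x]) -> complete P.
Proof.
move=> hP rel1 B BP.
have /set0Pn [x xB] := partition_neq0 hP BP.
have xX : x \in X by apply: (subsetP (partitionS hP BP)).
have := is_rel_pblock_sub hP (rel1 _ xX) (set11 x).
rewrite (def_pblock (partition_trivIset hP) BP xB) => sB.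
have -> : B = [set x] by apply/eqP; rewrite eqEsubset sB sub1set xB.
by rewrite cards1.
Qed.

End Relations.

Section Coherent.
Variables (T : finType) (D : {set T}) (S : {set {set T * T}}).
Hypothesis hS : coherent D S.
Local Notation P := (pblock S).

Lemma coherent_partition : partition S (setX D D).
Proof. by case: hS. Qed.

Lemma pblock_coh_mem p : p \in setX D D -> P p \in S.
Proof. by move=> pD; rewrite pblock_mem // (cover_partition coherent_partition). Qed.

Lemma mem_pblock_coh p : p \in setX D D -> p \in P p.
Proof. by move=> pD; rewrite mem_pblock (cover_partition coherent_partition). Qed.

Lemma def_pblock_coh B p : B \in S -> p \in B -> P p = B.
Proof. exact/def_pblock/partition_trivIset/coherent_partition. Qed.

Lemma cell_sub B : B \in S -> B \subset setX D D.
Proof. exact: partitionS coherent_partition. Qed.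

Lemma cell_dom B x y : B \in S -> (x, y) \in B -> x \in D /\ y \in D.
Proof. by move=> BS /(subsetP (cell_sub BS)); rewrite inE => /andP. Qed.

Lemma pblock_diag_sub x : x \in D -> P (x, x) \subset diag D.
Proof.
move=> xD; case: hS => hP hd _ _; apply: (is_rel_pblock_sub hP hd).
by rewrite inE /= eqxx.
Qed.

Lemma mem_cell_pblock R p : R \in S -> p \in setX D D -> (p \in R) = (R == P p).
Proof. by move=> RS pD; rewrite (eq_pblock_mem _ coherent_partition) ?RS. Qed.

Lemma pblock_eq2 R S0 p q : p \in setX D D -> q \in setX D D ->
  (R == P p) && (S0 == P q) = [&& R \in S, S0 \in S, p \in R & q \in S0].
Proof.
move=> pD qD; rewrite !(eq_pblock_mem _ coherent_partition) //.
by case: (R \in S); case: (S0 \in S); rewrite ?andbF.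
Qed.

(* The unique [g] with [(x, g) \in P (x, x)] and [(g, y) \in B] is [x]; so
   [inum (P (x, x)) B] is [1] on [B], which forces [(x', x') \in P (x, x)]. *)
Lemma pblock_row B x y x' y' : B \in S -> (x, y) \in B -> (x', y') \in B ->
  P (x, x) = P (x', x').
Proof.
move=> BS xyB xyB'.
have [xD _] := cell_dom BS xyB.
set d := P (x, x).
have dS : d \in S by apply: pblock_coh_mem; rewrite inE /= xD.
have in_d g z : (z, g) \in d -> g = z.
  by move/(subsetP (pblock_diag_sub xD)); rewrite inE /= => /andP [/eqP].
have : inum d B x' y' == 1.
  case: hS => _ _ _ /(_ _ _ _ dS BS BS _ _ _ _ xyB xyB') <-.
  apply/cards1P; exists x; apply/setP=> g; rewrite !inE.
  apply/andP/eqP => [[/in_d] //|->].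
  by rewrite xyB mem_pblock_coh // inE /= xD.
case/cards1P => g Eg.
have : g \in [set g | ((x', g) \in d) && ((g, y') \in B)] by rewrite Eg set11.
rewrite inE => /andP [x'g _]; have eg := in_d _ _ x'g; subst g.
by rewrite (def_pblock_coh dS x'g).
Qed.

Lemma pblock_swap p : P (p.2, p.1) = transp (P p).
Proof.
case: hS => _ _ htr _; case pD : (p \in setX D D).
  apply: def_pblock_coh; first exact/htr/pblock_coh_mem.
  by rewrite inE /= -surjective_pairing mem_pblock_coh.
rewrite !pblock_notin_cover ?(cover_partition coherent_partition) ?pD //.
- by apply/setP=> q; rewrite !inE.
- by move: pD; case: p => u v; rewrite !inE /= andbC => ->.
Qed.

Lemma card_col_pblock s v v' : s \in S -> v \in D -> v' \in D ->
  P (v, v) = P (v', v') -> #|[set g | (g, v) \in s]| = #|[set g | (g, v') \in s]|.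
Proof.
move=> sS vD v'D e; case: hS => _ _ htr hinum.
have col z : [set g | (g, z) \in s] = [set g | ((z, g) \in transp s) && ((g, z) \in s)].
  by apply/setP => g; rewrite !inE andbb.
have vvD : (v, v) \in setX D D by rewrite inE /= vD.
rewrite !col; apply: (hinum _ _ _ (htr _ sS) sS (pblock_coh_mem vvD)).
  exact: mem_pblock_coh.
by rewrite e mem_pblock_coh // inE /= v'D.
Qed.

Lemma count_pblock R S0 u v u' v' : u \in D -> v \in D -> u' \in D -> v' \in D ->
  P (u, v) = P (u', v') ->
  #|[set g in D | (R == P (u, g)) && (S0 == P (g, v))]| =
  #|[set g in D | (R == P (u', g)) && (S0 == P (g, v'))]|.
Proof.
move=> uD vD u'D v'D e.
have E w z : w \in D -> z \in D ->
    [set g in D | (R == P (w, g)) && (S0 == P (g, z))] =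
    if (R \in S) && (S0 \in S) then [set g | ((w, g) \in R) && ((g, z) \in S0)]
    else set0.
  move=> wD zD; apply/setP => g; rewrite inE.
  case gD: (g \in D) => /=.
    rewrite pblock_eq2 ?inE /= ?wD ?zD ?gD //.
    case: ifP => [/andP [-> ->]|]; first by rewrite inE.
    by rewrite inE; case: (R \in S); case: (S0 \in S).
  case: ifP => [/andP [RS _]|]; rewrite ?inE //.
  by apply/esym/negbTE/negP => /andP [/(cell_dom RS) [_]]; rewrite gD.
rewrite !E //; case: ifP => // /andP [RS S0S].
have uvD : (u, v) \in setX D D by rewrite inE /= uD vD.
case: hS => _ _ _ /(_ _ _ _ RS S0S (pblock_coh_mem uvD)); apply.
  exact: mem_pblock_coh.
by rewrite e mem_pblock_coh // inE /= u'D v'D.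
Qed.

(* All [g] with [(g, v) \in S0] share the fiber of the first coordinates of [S0]. *)
Lemma count_pblock_diag R S0 v v' : v \in D -> v' \in D -> P (v, v) = P (v', v') ->
  #|[set g in D | (R == P (g, g)) && (S0 == P (g, v))]| =
  #|[set g in D | (R == P (g, g)) && (S0 == P (g, v'))]|.
Proof.
move=> vD v'D e.
have E z : z \in D ->
    [set g in D | (R == P (g, g)) && (S0 == P (g, z))] =
    [set g | [&& R \in S, S0 \in S, (g, g) \in R & (g, z) \in S0]].
  move=> zD; apply/setP => g; rewrite !inE.
  case gD: (g \in D) => /=; first by rewrite pblock_eq2 ?inE /= ?zD ?gD.
  by apply/esym/negbTE/negP => /and4P [_ S0S _ /(cell_dom S0S) []]; rewrite gD.
rewrite !E //; case RS: (R \in S); case S0S: (S0 \in S) => //=.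
have /set0Pn [[x0 y0] xy0] := partition_neq0 coherent_partition S0S.
have [x0D _] := cell_dom S0S xy0.
have E2 z : [set g | ((g, g) \in R) && ((g, z) \in S0)] =
    if (x0, x0) \in R then [set g | (g, z) \in S0] else set0.
  apply/setP => g; rewrite inE.
  case gz: ((g, z) \in S0); last by rewrite andbF; case: ifP; rewrite inE ?gz.
  have [gD _] := cell_dom S0S gz.
  rewrite andbT !(mem_cell_pblock RS) ?inE /= ?gD ?x0D // (pblock_row S0S gz xy0).
  by case: ifP; rewrite inE ?gz.
by rewrite !E2; case: ifP => // _; apply: card_col_pblock.
Qed.

Lemma count_pblock_diagr R S0 u u' : u \in D -> u' \in D -> P (u, u) = P (u', u') ->
  #|[set g in D | (R == P (u, g)) && (S0 == P (g, g))]| =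
  #|[set g in D | (R == P (u', g)) && (S0 == P (g, g))]|.
Proof.
have swap w g : (R == P (w, g)) && (S0 == P (g, g)) =
    (transp S0 == P (g, g)) && (transp R == P (g, w)).
  have sw x y : P (y, x) = transp (P (x, y)) by apply: (pblock_swap (x, y)).
  by rewrite andbC (sw w g) {2}(sw g g) !(inj_eq (can_inj (@transpK _))).
have E w : [set g in D | (R == P (w, g)) && (S0 == P (g, g))] =
    [set g in D | (transp S0 == P (g, g)) && (transp R == P (g, w))].
  by apply/setP => g; rewrite !inE swap.
by move=> uD u'D e; rewrite !E; apply: count_pblock_diag.
Qed.

End Coherent.

Section CompleteConfiguration.
Variables (T : finType) (Y : {set T}).

Definition complete_cc : {set {set T * T}} := preim_partition id (setX Y Y).

Lemma complete_cc_partition : partition complete_cc (setX Y Y).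
Proof. exact: preim_partitionP. Qed.

Lemma complete_cc_cell B : B \in complete_cc -> exists2 p, p \in setX Y Y & B = [set p].
Proof.
case/imsetP => p pY ->; exists p => //; apply/setP=> q; rewrite !inE eq_sym.
by case: (eqVneq q p) => [->|_]; rewrite ?andbF ?andbT //; move: pY; rewrite inE.
Qed.

Lemma complete_complete_cc : complete complete_cc.
Proof. by move=> B /complete_cc_cell [p _ ->]; rewrite cards1. Qed.

Lemma complete_cc_coherent : coherent Y complete_cc.
Proof.
have hP := complete_cc_partition; split => //.
- apply: (is_rel_complete hP complete_complete_cc).
  by apply/subsetP=> p; rewrite !inE => /andP [/eqP <- ->]; rewrite andbb.
- move=> s /complete_cc_cell [[u v] uvY ->]; apply/imsetP; exists (v, u).
    by move: uvY; rewrite !inE andbC.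
  apply/setP => [[w z]]; rewrite !inE /= !xpair_eqE; move: uvY; rewrite inE /=.
  by case/andP => uY vY; apply/andP/and3P => [[/eqP -> /eqP ->]|[_ /eqP <- /eqP <-]];
    rewrite ?uY ?vY ?eqxx.
- move=> r s t _ _ /complete_cc_cell [p _ ->] a b a' b'.
  by rewrite !inE => /eqP <- /eqP [-> ->].
Qed.

Lemma fiber_complete_cc x : x \in Y -> fiber complete_cc [set x].
Proof.
move=> xY; apply/imsetP; exists (x, x); first by rewrite inE /= xY.
apply/setP=> [[u v]]; rewrite !inE /= xpair_eqE.
by apply/andP/andP => [[/eqP -> /eqP ->]|[_ /andP [/eqP <- /eqP <-]]]; rewrite ?xY ?eqxx.
Qed.

End CompleteConfiguration.

Section GeneralizedBase.
Variables (T : finType) (D : {set T}).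
Implicit Types (S : {set {set T * T}}) (Pi : {set {set T}}).

Lemma fission_of_complete S1 S2 : (forall r, is_rel S1 r -> r \subset setX D D) ->
  coherent D S2 -> complete S2 -> fission D S1 S2.
Proof.
move=> relS1 hS2 cS2; split=> // r /relS1.
exact: is_rel_complete (coherent_partition hS2) cS2.
Qed.

Lemma union_of_fibers1 S (G : {set T}) : (forall x, x \in G -> fiber S [set x]) ->
  union_of_fibers S G.
Proof.
move=> fibG; exists [set [set x] | x in G] => [_ /imsetP [x xG ->]|]; first exact: fibG.
apply/setP => x; apply/idP/bigcupP => [xG|[_ /imsetP [y yG ->]]].
  by exists [set x]; rewrite ?set11 // imset_f.
by rewrite inE => /eqP ->.
Qed.

Lemma gen_base_of_complete S Pi : (forall r, is_rel S r -> r \subset setX D D) ->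
  (forall G, G \in Pi -> G \subset D) ->
  (forall S2, fission D S S2 -> (forall G, G \in Pi -> union_of_fibers S2 G) ->
     complete S2) ->
  gen_base D S Pi.
Proof.
move=> relS PiD minS; exists (complete_cc D); last exact: complete_complete_cc.
split.
- apply: fission_of_complete relS (complete_cc_coherent D) _.
  exact: complete_complete_cc.
- move=> G GPi; apply: union_of_fibers1 => x xG.
  exact/fiber_complete_cc/(subsetP (PiD _ GPi)).
- move=> S2 fisS2 fibS2; apply: fission_of_complete; last exact: minS.
    by move=> r; apply: is_rel_sub (complete_cc_partition D).
  by case: fisS2.
Qed.

Lemma complete_of_gen_base S Pi S3 : gen_base D S Pi -> fission D S S3 ->
  (forall G, G \in Pi -> union_of_fibers S3 G) -> complete S3.
Proof.
move=> [S' [[hS' _] _ minS'] cS'] fisS3 fibS3.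
have [hS3 relS'] := minS' _ fisS3 fibS3.
apply: (complete_of_is_rel1 (coherent_partition hS3)) => x xD; apply: relS'.
by apply: (is_rel_complete (coherent_partition hS') cS'); rewrite sub1set.
Qed.

Lemma fiber_of_union_of_fibers1 S x : union_of_fibers S [set x] -> fiber S [set x].
Proof.
case=> F fibF eF; have : x \in \bigcup_(H in F) H by rewrite -eF set11.
case/bigcupP => H HF xH; suff -> : [set x] = H by apply: fibF.
by apply/eqP; rewrite eqEsubset sub1set xH eF (bigcup_sup _ HF).
Qed.

End GeneralizedBase.

Section PointExtension.
Variables (T : finType) (D : {set T}) (a : T) (S2 : {set {set T * T}}).
Hypotheses (aD : a \in D) (hS2 : coherent (D :\ a) S2).
Local Notation D' := (D :\ a).
Local Notation P := (pblock S2).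

(* [fold_point] maps [(a, v)] and [(v, a)] to [(v, v)], so the key of such a
   pair records the fiber of [v] in [S2]. *)
Definition fold_point (p : T * T) :=
  (if p.1 == a then p.2 else p.1, if p.2 == a then p.1 else p.2).

Definition ext_key p := (p.1 == a, p.2 == a, P (fold_point p)).

Definition point_ext := preim_partition ext_key (setX D D).
Local Notation K := ext_key.

Lemma point_ext_partition : partition point_ext (setX D D).
Proof. exact: preim_partitionP. Qed.

Lemma point_ext_cell B : B \in point_ext ->
  exists2 x, x \in setX D D & B = [set y in setX D D | K x == K y].
Proof. by case/imsetP => x xD ->; exists x. Qed.

Lemma pblock_point_ext x : x \in setX D D ->
  pblock point_ext x = [set y in setX D D | K x == K y].
Proof.
move=> xD; apply: def_pblock (partition_trivIset point_ext_partition) _ _.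
  exact: imset_f.
by rewrite inE xD eqxx.
Qed.

Lemma mem_setXD1 u v :
  ((u, v) \in setX D' D') = [&& u != a, u \in D, v != a & v \in D].
Proof. by rewrite inE /= !in_setD1 -!andbA. Qed.

Lemma ext_key_r u : K (u, a) = (u == a, true, P (u, u)).
Proof. by rewrite /K /fold_point /= eqxx; case: ifP => [/eqP ->|]. Qed.

Lemma ext_key_l v : K (a, v) = (true, v == a, P (v, v)).
Proof. by rewrite /K /fold_point /= eqxx; case: ifP => [/eqP ->|]. Qed.

Lemma ext_key_Dr u g : g != a ->
  K (u, g) = (u == a, false, P (if u == a then g else u, g)).
Proof. by move=> ga; rewrite /K /fold_point /= (negbTE ga). Qed.

Lemma ext_key_Dl g v : g != a ->
  K (g, v) = (false, v == a, P (g, if v == a then g else v)).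
Proof. by move=> ga; rewrite /K /fold_point /= (negbTE ga). Qed.

Lemma ext_key_swap p : K (p.2, p.1) = (p.2 == a, p.1 == a, transp (P (fold_point p))).
Proof. by rewrite -(pblock_swap hS2). Qed.

Lemma eq_ext_key_swap x y : (K x == K y) = (K (x.2, x.1) == K (y.2, y.1)).
Proof.
rewrite !ext_key_swap /K !xpair_eqE (inj_eq (can_inj (@transpK _))).
by case: (_ == (y.1 == a)); case: (_ == (y.2 == a)).
Qed.

Lemma point_ext_diag : is_rel point_ext (diag D).
Proof.
apply: (is_rel_pblock point_ext_partition).
  by apply/subsetP=> [[u v]]; rewrite !inE /= => /andP [/eqP <- ->].
move=> [x y]; rewrite inE /= => /andP [/eqP <- xD].
rewrite pblock_point_ext ?inE /= ?xD //.
apply/subsetP => [[u v]]; rewrite !inE /= => /andP [/andP [uD vD]].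
rewrite /K /fold_point /= !xpair_eqE => /andP [/andP [/eqP ua /eqP va]].
case xa: (x == a) ua va => ua va; first by rewrite (eqP (esym ua)) (eqP (esym va)) eqxx aD.
rewrite -ua -va /= => /eqP e.
have xD' : x \in D' by rewrite in_setD1 xa xD.
have uvD' : (u, v) \in setX D' D' by rewrite mem_setXD1 -ua -va uD vD.
have := subsetP (pblock_diag_sub hS2 xD') (u, v).
by rewrite e (mem_pblock_coh hS2) // inE /= => /(_ isT) /andP [-> _].
Qed.

Lemma point_ext_transp B : B \in point_ext -> transp B \in point_ext.
Proof.
case/point_ext_cell => x xD ->; apply/imsetP; exists (x.2, x.1).
  by move: xD; rewrite !inE /= andbC.
apply/setP => [[w z]]; rewrite !inE /= [(z \in D) && _]andbC.
by rewrite (eq_ext_key_swap x (z, w)).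
Qed.

Lemma ext_key_row u v u' v' : u \in D -> v \in D -> u' \in D -> v' \in D ->
  K (u, v) = K (u', v') -> P (u, u) = P (u', u').
Proof.
move=> uD vD u'D v'D; rewrite /K /fold_point /= => [[ua va e]].
rewrite -ua -va in e.
case uaT: (u == a) ua e => ua e; first by rewrite (eqP uaT) -(eqP (esym ua)).
case vaT: (v == a) va e => va e //=.
have uvD : (u, v) \in setX D' D' by rewrite mem_setXD1 uaT vaT uD vD.
apply: (pblock_row hS2 (pblock_coh_mem hS2 uvD) (mem_pblock_coh hS2 uvD)
          (x' := u') (y' := v')).
by rewrite e (mem_pblock_coh hS2) // mem_setXD1 -ua -va u'D v'D.
Qed.

Lemma ext_key_col u v u' v' : u \in D -> v \in D -> u' \in D -> v' \in D ->
  K (u, v) = K (u', v') -> P (v, v) = P (v', v').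
Proof.
move=> uD vD u'D v'D E; apply: (ext_key_row (v := u) (v' := u')) => //.
by rewrite (ext_key_swap (u, v)) (ext_key_swap (u', v')); move: E; rewrite /K => [[-> -> ->]].
Qed.

Lemma inum_point_ext kr ks u v : u \in D -> v \in D ->
  inum [set y in setX D D | kr == K y] [set y in setX D D | ks == K y] u v =
  ((kr == K (u, a)) && (ks == K (a, v))) +
  #|[set g in D' | (kr == K (u, g)) && (ks == K (g, v))]|.
Proof.
move=> uD vD; rewrite /inum (cardsD1 a); congr (_ + _).
  by rewrite !inE /= uD vD aD.
apply: eq_card => g; rewrite !inE /= uD vD /=.
by case: (g == a); case: (g \in D); rewrite /= ?andbF.
Qed.

Lemma count_point_ext kr ks u v u' v' : u \in D -> v \in D -> u' \in D -> v' \in D ->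
  K (u, v) = K (u', v') ->
  #|[set g in D' | (kr == K (u, g)) && (ks == K (g, v))]| =
  #|[set g in D' | (kr == K (u', g)) && (ks == K (g, v'))]|.
Proof.
case: kr ks => [[r1 r2] R] [[s1 s2] S0] uD vD u'D v'D.
have E w z : [set g in D' | ((r1, r2, R) == K (w, g)) && ((s1, s2, S0) == K (g, z))] =
    if [&& r1 == (w == a), ~~ r2, ~~ s1 & s2 == (z == a)]
    then [set g in D' | (R == P (if w == a then g else w, g)) &&
                        (S0 == P (g, if z == a then g else z))]
    else set0.
  case c: [&& _, _, _ & _]; apply/setP=> g; rewrite !inE; case ga: (g == a) => //=;
    rewrite (ext_key_Dr _ (negbT ga)) (ext_key_Dl _ (negbT ga)) !xpair_eqE.
    by case/and4P: c => -> /negbTE -> /negbTE -> ->.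
  by move: c; case: (r1 == _); case: r2; case: s1; case: (s2 == _); rewrite ?andbF.
rewrite /K /fold_point /= => [[ua va e]]; rewrite !E -ua -va {E}.
case: ifP => // _; rewrite -ua -va in e.
case uaT: (u == a) ua e => ua; case vaT: (v == a) va => va /= e.
- by [].
- apply: (count_pblock_diag hS2); rewrite ?in_setD1 -?va ?vaT ?vD ?v'D //.
- apply: (count_pblock_diagr hS2); rewrite ?in_setD1 -?ua ?uaT ?uD ?u'D //.
- by apply: (count_pblock hS2); rewrite ?in_setD1 -?ua -?va ?uaT ?vaT ?uD ?vD ?u'D ?v'D.
Qed.

Lemma point_ext_inum r s t : r \in point_ext -> s \in point_ext -> t \in point_ext ->
  forall u v u' v', (u, v) \in t -> (u', v') \in t -> inum r s u v = inum r s u' v'.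
Proof.
move=> /point_ext_cell [xr _ ->] /point_ext_cell [xs _ ->] /point_ext_cell [xt _ ->].
move=> u v u' v'; rewrite !inE /= => /andP [/andP [uD vD] /eqP e] /andP [/andP [u'D v'D] /eqP e'].
have E : K (u, v) = K (u', v') by rewrite -e -e'.
rewrite !inum_point_ext //; congr (_ + _); last exact: count_point_ext.
rewrite !ext_key_r !ext_key_l (ext_key_row uD vD u'D v'D E) (ext_key_col uD vD u'D v'D E).
by move: E; rewrite /K => [[-> -> _]].
Qed.

Lemma point_ext_coherent : coherent D point_ext.
Proof.
split; [exact: point_ext_partition | exact: point_ext_diag |
        exact: point_ext_transp | exact: point_ext_inum].
Qed.

Lemma fiber_point_ext H : fiber S2 H -> fiber point_ext H.
Proof.
move=> HS; have /set0Pn [[x x'] xx] := partition_neq0 (coherent_partition hS2) HS.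
have := xx; rewrite inE /= => /andP [/eqP exx xH]; subst x'.
have [xD' _] := cell_dom hS2 HS xx; move: (xD'); rewrite in_setD1 => /andP [xa xD].
have keyH y z : (y, z) \in setX D' D' -> K (y, z) = (false, false, P (y, z)).
  by rewrite mem_setXD1 => /and4P [ya _ za _]; rewrite /K /fold_point /= (negbTE ya) (negbTE za).
apply/imsetP; exists (x, x); first by rewrite inE /= xD.
have Kx : K (x, x) = (false, false, diag H).
  by rewrite keyH ?(def_pblock_coh hS2 HS xx) // inE /= xD'.
apply/setP => [[u v]]; rewrite [in RHS]inE Kx; apply/idP/andP => [uvH|[uvD /eqP e]].
  have uvD' := subsetP (cell_sub hS2 HS) _ uvH.
  move: (uvD'); rewrite mem_setXD1 => /and4P [_ uD _ vD].
  by rewrite inE /= uD vD keyH // (def_pblock_coh hS2 HS uvH).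
move: e; rewrite /K /fold_point /=; case ua: (u == a) => //; case va: (v == a) => //= -[e].
have uvD' : (u, v) \in setX D' D' by move: uvD; rewrite inE mem_setXD1 ua va => /andP [-> ->].
by rewrite e (mem_pblock_coh hS2).
Qed.

Lemma fiber_point_ext_point : fiber point_ext [set a].
Proof.
apply/imsetP; exists (a, a); first by rewrite inE /= aD.
apply/setP => [[u v]]; rewrite !inE /= /K /fold_point /= eqxx !xpair_eqE.
apply/andP/andP => [[/eqP -> /eqP ->]|[_ /andP [/andP [/eqP ua /eqP va] _]]].
  by rewrite aD !eqxx.
by rewrite (eqP (esym ua)) (eqP (esym va)) eqxx.
Qed.

Lemma union_of_fibers_point_ext G : union_of_fibers S2 (G :\ a) ->
  union_of_fibers point_ext G.
Proof.
case=> F fibF eF; case aG: (a \in G); last first.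
  exists F => [H /fibF /fiber_point_ext //|]; rewrite -eF; apply/setP => x.
  by rewrite in_setD1; case: eqP => // ->; rewrite aG.
exists ([set a] |: F) => [H|].
  by rewrite !inE => /orP [/eqP ->|/fibF /fiber_point_ext //]; apply: fiber_point_ext_point.
rewrite bigcup_setU big_set1 -eF; apply/setP => x; rewrite !inE.
by case: eqP => [->|]; rewrite ?aG.
Qed.

Lemma complete_of_point_ext : complete point_ext -> complete S2.
Proof.
move=> cext B BS; have /set0Pn [[u v] uvB] := partition_neq0 (coherent_partition hS2) BS.
have key y z : (y, z) \in B -> K (y, z) = (false, false, B).
  move=> yzB; have := subsetP (cell_sub hS2 BS) _ yzB.
  rewrite mem_setXD1 => /and4P [ya _ za _].
  by rewrite /K /fold_point /= (negbTE ya) (negbTE za) (def_pblock_coh hS2 BS yzB).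
have uvD : (u, v) \in setX D D.
  by have := subsetP (cell_sub hS2 BS) _ uvB; rewrite mem_setXD1 inE => /and4P [_ -> _ ->].
have Buv : B \subset pblock point_ext (u, v).
  rewrite pblock_point_ext //; apply/subsetP => [[y z] yzB]; rewrite inE (key _ _ uvB) key //.
  by have := subsetP (cell_sub hS2 BS) _ yzB; rewrite mem_setXD1 inE eqxx => /and4P [_ -> _ ->].
apply/eqP; rewrite eqn_leq -{1}(cext (pblock point_ext (u, v))) ?subset_leq_card //.
  by rewrite card_gt0; apply/set0Pn; exists (u, v).
by rewrite pblock_mem // (cover_partition point_ext_partition).
Qed.

End PointExtension.

Lemma restr_rel_sub (T : finType) (D : {set T}) (S : {set {set T * T}}) r :
  is_rel (restr D S) r -> r \subset setX D D.
Proof.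
case=> P0 sP0 ->; apply/subsetP => x /bigcupP [B /(subsetP sP0)].
by rewrite in_setD1 => /andP [_ /imsetP [s _ ->]]; rewrite inE => /andP [].
Qed.

Section Refinement.
Variables (T : finType) (D : {set T}) (a : T) (Sa S2 : {set {set T * T}}).
Hypotheses (aD : a \in D) (hSa : coherent D Sa) (fib_a : fiber Sa [set a])
  (hS2 : coherent (D :\ a) S2)
  (relS2 : forall r, is_rel (restr (D :\ a) Sa) r -> is_rel S2 r).
Local Notation D' := (D :\ a).

Lemma pblock_restr p q : p \in setX D' D' -> q \in setX D' D' ->
  pblock S2 p = pblock S2 q -> q \in pblock Sa p.
Proof.
move=> pD' qD' epq.
have pD : p \in setX D D by apply: subsetP pD'; apply: setXS; apply: subsetDl.
set R := pblock Sa p :&: setX D' D'.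
have pR : p \in R by rewrite inE pD' (mem_pblock_coh hSa).
have RS : R \in restr D' Sa.
  rewrite in_setD1; apply/andP; split; first by apply/set0Pn; exists p.
  exact/imset_f/(pblock_coh_mem hSa).
have relR : is_rel S2 R by apply: relS2; exists [set R]; rewrite ?sub1set ?cover1.
have := is_rel_pblock_sub (coherent_partition hS2) relR pR; rewrite epq.
move/subsetP/(_ q (mem_pblock_coh hS2 qD')).
by rewrite inE => /andP [].
Qed.

(* Every pair of [pblock Sa (a, v)] starts at [a], so [v] has exactly one
   in-neighbour there; in-valencies only depend on the fiber of [v]. *)
Lemma mem_pblock_point_row v v' : v \in D' -> v' \in D' ->
  (v', v') \in pblock Sa (v, v) -> (a, v') \in pblock Sa (a, v).
Proof.
move=> vD' v'D' vv'.
have vD : v \in D by move: vD'; rewrite in_setD1 => /andP [].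
have v'D : v' \in D by move: v'D'; rewrite in_setD1 => /andP [].
set s0 := pblock Sa (a, v).
have avD : (a, v) \in setX D D by rewrite inE /= aD vD.
have s0S : s0 \in Sa by apply: (pblock_coh_mem hSa).
have row_a g w : (g, w) \in s0 -> g = a.
  move=> gw; have [gD _] := cell_dom hSa s0S gw.
  have := pblock_row hSa s0S gw (mem_pblock_coh hSa avD).
  rewrite (def_pblock_coh hSa fib_a (p := (a, a))) ?inE /= ?eqxx ?set11 // => eg.
  have : (g, g) \in pblock Sa (g, g) by apply: (mem_pblock_coh hSa); rewrite inE /= gD.
  by rewrite eg !inE /= => /andP [_ /eqP].
have : #|[set g | (g, v') \in s0]| == 1.
  rewrite -(card_col_pblock hSa s0S vD v'D); last first.
    exact/esym/(same_pblock (partition_trivIset (coherent_partition hSa)) vv').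
  apply/cards1P; exists a; apply/setP => g; rewrite !inE.
  by apply/idP/eqP => [/row_a //|->]; apply: (mem_pblock_coh hSa).
case/cards1P => g Eg; have : g \in [set g | (g, v') \in s0] by rewrite Eg set11.
by rewrite inE => gv'; rewrite -(row_a _ _ gv').
Qed.

Lemma ext_key_refines x y : x \in setX D D -> y \in setX D D ->
  ext_key a S2 x = ext_key a S2 y -> y \in pblock Sa x.
Proof.
case: x => u v; case: y => u' v'; rewrite !inE /= => /andP [uD vD] /andP [u'D v'D].
rewrite /ext_key /fold_point /= => [[ua va e]].
have inD' w : w \in D -> (w == a) = false -> w \in D' by move=> wD wa; rewrite in_setD1 wa.
case uaT: (u == a) ua e => ua; case u'aT: (u' == a) ua => // _;
  case vaT: (v == a) va => va; case v'aT: (v' == a) va => // _ e.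
- by rewrite (eqP uaT) (eqP u'aT) (eqP vaT) (eqP v'aT) (mem_pblock_coh hSa) // inE /= aD.
- rewrite (eqP uaT) (eqP u'aT); apply: mem_pblock_point_row; rewrite ?inD' //.
  by apply: pblock_restr; rewrite // inE /= ?inD'.
- rewrite (eqP vaT) (eqP v'aT) -[(u, a)]/((a, u).2, (a, u).1) (pblock_swap hSa) inE /=.
  apply: mem_pblock_point_row; rewrite ?inD' //.
  by apply: pblock_restr; rewrite // inE /= ?inD'.
- by apply: pblock_restr; rewrite // inE /= ?inD'.
Qed.

Lemma is_rel_point_ext r : is_rel Sa r -> is_rel (point_ext D a S2) r.
Proof.
move=> relr; have rD := is_rel_sub (coherent_partition hSa) relr.
apply: (is_rel_pblock (point_ext_partition D a S2) rD) => x xr.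
have xD : x \in setX D D by apply: (subsetP rD).
apply/subsetP => y; rewrite pblock_point_ext // inE => /andP [yD /eqP e].
exact: subsetP (is_rel_pblock_sub (coherent_partition hSa) relr xr) _ (ext_key_refines xD yD e).
Qed.

End Refinement.

Unset Implicit Arguments.

Theorem lemma3p1 (T : finType) (D : {set T}) (S : {set {set T * T}})
  (Pi : {set {set T}}) (a : T) (Sa : {set {set T * T}}) :
  coherent D S ->
  (forall G, G \in Pi -> G \subset D) ->
  gen_base D S Pi ->
  a \in D ->
  Pi_fission D S [set [set a]] Sa ->
  gen_base (D :\ a) (restr (D :\ a) Sa) [set G :\ a | G in Pi].
Proof.
move=> _ PiD base aD [[hSa relSa] fibSa _].
have fib_a := fiber_of_union_of_fibers1 (fibSa _ (set11 _)).
apply: gen_base_of_complete => [r|_ /imsetP [G GPi ->]|S2 [hS2 relS2] fibS2].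
- exact: restr_rel_sub.
- exact/setSD/PiD.
apply: (complete_of_point_ext hS2); apply: (complete_of_gen_base base).
  split; first exact: point_ext_coherent.
  by move=> r /relSa; apply: is_rel_point_ext.
by move=> G GPi; apply/union_of_fibers_point_ext/fibS2/imset_f.
Qed.
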